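(* In the zero-sum three-door Monty Hall game described in the context, the mixed strategy $P^*$ of Conie assigning probability $1/3$ to each of $1\,\mathrm{s}\,\mathrm{s}$, $2\,\mathrm{s}\,\mathrm{s}$, $3\,\mathrm{s}\,\mathrm{s}$ (choose a door uniformly at random, then always switch) is Conie's unique minimax strategy, i.e. the unique mixed strategy $P$ with $\min_Q W(P,Q)=\max_{P'}\min_Q W(P',Q)$.
   Context: Doors are numbered $1,2,3$. A pure strategy of Monte is a pair $(\theta,d)$ with $\theta\in\{1,2,3\}$ (the door hiding the prize) and $d\in\{1,2,3\}\setminus\{\theta\}$ (six strategies). A pure strategy of Conie is a triple $x\,a\,b$ with $x\in\{1,2,3\}$ and $a,b\in\{\mathrm{h},\mathrm{s}\}$ (twelve strategies). Under the profile $((\theta,d),x\,a\,b)$: Monte offers door $y=\theta$ if $x\neq\theta$ and $y=d$ if $x=\theta$; Conie's action is $a$ if $y$ is the smaller of the two doors in $\{1,2,3\}\setminus\{x\}$ and $b$ otherwise; her final choice is $z=x$ for action $\mathrm{h}$ and $z=y$ for action $\mathrm{s}$; she wins (payoff 1) iff $z=\theta$, else payoff 0; Monte's payoff is the negative. Mixed strategies are probability distributions on pure strategies, played independently; $W(P,Q)$ denotes the probability that Conie wins when Conie plays $P$ and Monte plays $Q$. *)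

From HB Require Import structures.
From mathcomp Require Import all_boot all_order all_algebra.
From mathcomp Require Import all_classical all_reals.
Set Implicit Arguments. Unset Strict Implicit. Unset Printing Implicit Defensive.
Import Order.TTheory GRing.Theory Num.Theory.
Local Open Scope ring_scope.
Local Open Scope classical_set_scope.

(* Doors 1,2,3 are represented by 'I_3 = {0,1,2} (door k+1 is ordinal k). *)
Definition door := 'I_3.

Definition monte_pure := {p : door * door | p.1 != p.2}.
(* Conie's pure strategies x a b; the booleans are true for "s" (switch),
   false for "h" (hold). *)
Definition conie_pure := (door * bool * bool)%type.

Definition win (c : conie_pure) (m : monte_pure) : bool :=
  let: (x, a, b) := c in
  let theta := (val m).1 in
  let d := (val m).2 in
  let y := if x != theta then theta else d in
  (* y is the smaller of the two doors other than x iff every door other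
     than x and y is larger than y *)
  let y_small := [forall z : door, ((z != x) && (z != y)) ==> (y < z)%N] in
  let act := if y_small then a else b in
  let z := if act then y else x in
  z == theta.

Section Game.
Variable R : realType.

Definition is_mixed (T : finType) (P : {ffun T -> R}) : Prop :=
  (forall t, 0 <= P t) /\ \sum_(t : T) P t = 1.

Definition W (P : {ffun conie_pure -> R}) (Q : {ffun monte_pure -> R}) : R :=
  \sum_(c : conie_pure) \sum_(m : monte_pure) P c * Q m * (win c m)%:R.

Definition worst (P : {ffun conie_pure -> R}) : R :=
  inf [set W P Q | Q in [set Q : {ffun monte_pure -> R} | is_mixed Q]].

Definition game_value : R :=
  sup [set worst P | P in [set P : {ffun conie_pure -> R} | is_mixed P]].

Definition is_minimax (P : {ffun conie_pure -> R}) : Prop :=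
  is_mixed P /\ worst P = game_value.

Definition Pstar : {ffun conie_pure -> R} :=
  [ffun c => let: (_, a, b) := c in if a && b then 3^-1 else 0].
End Game.

(* Fix one of Monte's six pure strategies at random.  The action a that Conie
   takes when offered the smaller remaining door is then used in three games:
   the two with the prize behind that door, where switching wins, and the one
   with the prize behind her own door, where holding wins; likewise for b.
   Hence the pure strategy x a b wins 4 - #holds of the six games, so every
   mixed P guarantees at most 2/3, and only if it never holds.  Against such P,
   hiding the prize behind theta wins for Monte with probability P(theta s s),
   so guaranteeing 2/3 forces P(theta s s) = 1/3 for every theta; conversely
   P* wins with probability 2/3 against every strategy of Monte. *)

From mathcomp Require Import all_boot all_order all_algebra.
From mathcomp Require Import all_classical all_reals.
From mathcomp Require Import lra.
Set Implicit Arguments. Unset Strict Implicit. Unset Printing Implicit Defensive.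
Import Order.TTheory GRing.Theory Num.Theory.
Local Open Scope ring_scope.
Local Open Scope classical_set_scope.

Definition door1 : door := @Ordinal 3 0 isT.
Definition door2 : door := @Ordinal 3 1 isT.
Definition door3 : door := @Ordinal 3 2 isT.

Lemma doorP (x : door) : [\/ x = door1, x = door2 | x = door3].
Proof.
by case: x => -[|[|[|//]]] ?; [constructor 1|constructor 2|constructor 3]; apply: val_inj.
Qed.

Lemma forall_doorE (p : pred door) : [forall z, p z] = [&& p door1, p door2 & p door3].
Proof.
apply/forallP/and3P => [p_all|[p1 p2 p3] z]; first by split.
by case: (doorP z) => ->.
Qed.

Lemma sum_doorE (V : nmodType) (F : door -> V) :
  \sum_(x : door) F x = F door1 + F door2 + F door3.
Proof.
rewrite /door !big_ord_recr big_ord0 /= add0r.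
by congr (_ + _ + _); congr F; apply: val_inj.
Qed.

Lemma sum_conie_pureE (V : nmodType) (F : conie_pure -> V) :
  \sum_(c : conie_pure) F c = \sum_(x : door) \sum_(a : bool) \sum_(b : bool) F (x, a, b).
Proof.
by rewrite pair_big pair_big; apply: eq_bigr => -[[x a] b].
Qed.

Definition monte_strategy (theta d : door) (H : theta != d) : monte_pure :=
  exist _ (theta, d) H.

Definition monte_strategies : seq monte_pure :=
  [:: @monte_strategy door1 door2 isT;
      @monte_strategy door1 door3 isT;
      @monte_strategy door2 door1 isT;
      @monte_strategy door2 door3 isT;
      @monte_strategy door3 door1 isT;
      @monte_strategy door3 door2 isT].

Lemma win_count x a b :
  (\sum_(m <- monte_strategies) win (x, a, b) m + ~~ a + ~~ b = 4)%N.
Proof.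
rewrite /monte_strategies !big_cons big_nil /win !forall_doorE.
by case: (doorP x) => ->; case: a; case: b.
Qed.

Lemma win_always_switch x m : win (x, true, true) m = (x != (val m).1).
Proof.
case: m => -[theta d] /= neq_theta_d; rewrite /win /= if_same.
by case: (x != theta); rewrite ?eqxx //= eq_sym (negbTE neq_theta_d).
Qed.

Section MontyHall.
Variable R : realType.
Implicit Types (P : {ffun conie_pure -> R}) (Q : {ffun monte_pure -> R}).

Definition win_prob P (m : monte_pure) : R := \sum_c P c * (win c m)%:R.

Lemma W_win_prob P Q : W P Q = \sum_m Q m * win_prob P m.
Proof.
rewrite /W exchange_big; apply: eq_bigr => m _; rewrite /win_prob mulr_sumr.
by apply: eq_bigr => c _; rewrite mulrAC mulrC.
Qed.

Definition pure_strategy (T : finType) (t0 : T) : {ffun T -> R} :=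
  [ffun t => (t == t0)%:R].

Lemma pure_strategy_mixed (T : finType) (t0 : T) : is_mixed (pure_strategy t0).
Proof.
split=> [t|]; first by rewrite ffunE ler0n.
rewrite (bigD1 t0) //= big1 => [|t /negbTE neq_t]; first by rewrite ffunE eqxx addr0.
by rewrite ffunE neq_t.
Qed.

Lemma W_pure_strategy P m : W P (pure_strategy m) = win_prob P m.
Proof.
rewrite W_win_prob (bigD1 m) //= big1 => [|m' /negbTE neq_m].
  by rewrite ffunE eqxx mul1r addr0.
by rewrite ffunE neq_m mul0r.
Qed.

Lemma W_ge0 P Q : is_mixed P -> is_mixed Q -> 0 <= W P Q.
Proof.
move=> [P_ge0 _] [Q_ge0 _]; apply: sumr_ge0 => c _; apply: sumr_ge0 => m _.
by rewrite !mulr_ge0.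
Qed.

Lemma worst_le_W P Q : is_mixed P -> is_mixed Q -> worst P <= W P Q.
Proof.
move=> mixP mixQ; apply: ge_inf; last by exists Q.
by exists 0 => _ [Q' mixQ' <-]; apply: W_ge0.
Qed.

Lemma worst_le_win_prob P m : is_mixed P -> worst P <= win_prob P m.
Proof.
by move=> mixP; rewrite -W_pure_strategy; apply: worst_le_W => //; apply: pure_strategy_mixed.
Qed.

Lemma le_worst P r : (forall Q, is_mixed Q -> r <= W P Q) -> r <= worst P.
Proof.
move=> r_le; apply: lb_le_inf; last by move=> _ [Q mixQ <-]; apply: r_le.
set m := @monte_strategy door1 door2 isT.
by exists (W P (pure_strategy m)); exists (pure_strategy m) => //; apply: pure_strategy_mixed.
Qed.

Definition hold_count (c : conie_pure) : nat := ~~ c.1.2 + ~~ c.2.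

Lemma sum_win_prob_monte_strategies P : is_mixed P ->
  \sum_(m <- monte_strategies) win_prob P m = 4 - \sum_c P c * (hold_count c)%:R.
Proof.
move=> [_ sumP1]; rewrite exchange_big /=.
have -> : 4 = \sum_c P c * 4 :> R by rewrite -mulr_suml sumP1 mul1r.
rewrite -sumrB; apply: eq_bigr => -[[x a] b] _.
rewrite -mulr_sumr -natr_sum -mulrBr -natrB -(win_count x a b) /hold_count /= -addnA ?addnK //.
exact: leq_addl.
Qed.

Lemma worst_le_hold_count P : is_mixed P ->
  worst P *+ 6 <= 4 - \sum_c P c * (hold_count c)%:R.
Proof.
move=> mixP; rewrite -sum_win_prob_monte_strategies //.
have -> : worst P *+ 6 = \sum_(m <- monte_strategies) worst P.
  by rewrite big_const_seq count_predT iter_addr addr0.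
by apply: ler_sum => m _; apply: worst_le_win_prob.
Qed.

Lemma worst_le_two_thirds P : is_mixed P -> worst P <= 2 / 3.
Proof.
move=> mixP; have := worst_le_hold_count mixP; rewrite -mulr_natr.
have : 0 <= \sum_c P c * (hold_count c)%:R.
  by apply: sumr_ge0 => c _; rewrite mulr_ge0 ?mixP.1.
lra.
Qed.

Definition switches_only P := forall c, ~~ (c.1.2 && c.2) -> P c = 0.

Lemma switches_only_of_worst P : is_mixed P -> 2 / 3 <= worst P -> switches_only P.
Proof.
move=> mixP two_thirds_le [[x a] b] /= not_ss.
have hold_count_ge0 c : true -> 0 <= P c * (hold_count c)%:R by rewrite mulr_ge0 ?mixP.1.
have sum_hold_count0 : \sum_c P c * (hold_count c)%:R = 0.
  apply/eqP; rewrite eq_le sumr_ge0 ?andbT //.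
  by have := worst_le_hold_count mixP; rewrite -mulr_natr; lra.
have hold_count_gt0 : (0 < hold_count (x, a, b))%N by case: a b not_ss => -[].
have /eqP := psumr_eq0P hold_count_ge0 sum_hold_count0 (i := (x, a, b)) isT.
by rewrite mulf_eq0 pnatr_eq0 eqn0Ngt hold_count_gt0 orbF => /eqP.
Qed.

Lemma sum_always_switch P : is_mixed P -> switches_only P ->
  \sum_x P (x, true, true) = 1.
Proof.
move=> [_ sumP1] so; rewrite -sumP1 sum_conie_pureE; apply: eq_bigr => x _.
by rewrite !big_bool /= (so (x, true, false)) // (so (x, false, true)) //
           (so (x, false, false)) // !addr0.
Qed.

Lemma win_prob_switches_only P m : is_mixed P -> switches_only P ->
  win_prob P m = 1 - P ((val m).1, true, true).
Proof.
move=> mixP so; rewrite -(sum_always_switch mixP so) /win_prob sum_conie_pureE.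
under eq_bigr => x _ do
  rewrite !big_bool win_always_switch /= (so (x, true, false)) // (so (x, false, true)) //
          (so (x, false, false)) // !mul0r !addr0.
by rewrite !sum_doorE; case: (doorP (val m).1) => ->; rewrite /= !mulr1 !mulr0; lra.
Qed.

Lemma Pstar_mixed : is_mixed (Pstar R).
Proof.
split=> [[[x a] b]|]; first by rewrite ffunE; case: (a && b); rewrite ?invr_ge0.
rewrite sum_conie_pureE !sum_doorE !big_bool !ffunE /=; lra.
Qed.

Lemma Pstar_switches_only : switches_only (Pstar R).
Proof. by move=> [[x a] b] /negbTE not_ss; rewrite ffunE /= not_ss. Qed.

Lemma win_prob_Pstar m : win_prob (Pstar R) m = 2 / 3.
Proof.
rewrite win_prob_switches_only ?ffunE /=.
- lra.
- exact: Pstar_mixed.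
- exact: Pstar_switches_only.
Qed.

Lemma worst_Pstar : worst (Pstar R) = 2 / 3.
Proof.
apply/eqP; rewrite eq_le worst_le_two_thirds /=; last exact: Pstar_mixed.
apply: le_worst => Q [_ sumQ1]; rewrite W_win_prob.
under eq_bigr do rewrite win_prob_Pstar.
by rewrite -mulr_suml sumQ1 mul1r.
Qed.

Lemma game_value_two_thirds : game_value R = 2 / 3.
Proof.
rewrite /game_value; set S := [set worst _ | _ in _].
have worst_le x : S x -> x <= 2 / 3.
  by move=> [P mixP <-]; apply: worst_le_two_thirds.
have Pstar_in : S (worst (Pstar R)) by exists (Pstar R) => //; apply: Pstar_mixed.
apply/eqP; rewrite eq_le; apply/andP; split.
  by apply: ge_sup => //; exists (worst (Pstar R)).
by rewrite -worst_Pstar; apply: ub_le_sup => //; exists (2 / 3).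
Qed.

Lemma eq_Pstar_of_worst P : is_mixed P -> 2 / 3 <= worst P -> P = Pstar R.
Proof.
move=> mixP two_thirds_le; have so := switches_only_of_worst mixP two_thirds_le.
have le_third theta d (neq_theta_d : theta != d) : P (theta, true, true) <= 3^-1.
  have := worst_le_win_prob (monte_strategy neq_theta_d) mixP.
  by rewrite win_prob_switches_only //=; lra.
have le1 := le_third door1 door2 isT.
have le2 := le_third door2 door1 isT.
have le3 := le_third door3 door1 isT.
have := sum_always_switch mixP so; rewrite sum_doorE => sum1.
apply/ffunP => -[[x a] b]; rewrite ffunE /=.
case: ifPn => [/andP[-> ->]|not_ss]; last exact: so.
by case: (doorP x) => ->; lra.
Qed.

End MontyHall.

Theorem mainTheorem8 (R : realType) (P : {ffun conie_pure -> R}) :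
  is_minimax P <-> P = Pstar R.
Proof.
rewrite /is_minimax game_value_two_thirds; split => [[mixP worstP]|->].
  by apply: eq_Pstar_of_worst; rewrite ?worstP.
by rewrite worst_Pstar; split; first exact: Pstar_mixed.
Qed.
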